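(* In the operad $\mathcal{W}$ of black boxes and wiring diagrams, composition is associative: for composable wiring diagrams $\tau\colon W\to X$, $\phi\colon X\to Y$, $\psi\colon Y\to Z$ (where each domain may be an indexed family of black boxes, composed via disjoint unions of families), one has $(\psi\circ\phi)\circ\tau=\psi\circ(\phi\circ\tau)$ as wiring diagrams (up to isomorphism of the data); equivalently, the associativity axiom for a symmetric colored operad holds for $\mathcal{W}$.
   Context: A black box $X=(\mathrm{in}(X),\mathrm{out}(X),{\tt vset})$: finite sets of input and output wires with ${\tt vset}$ assigning a pointed set to each wire. For an indexed family $Y=(Y(i))_{i\in n}$ put $\mathrm{in}(Y)=\coprod_i\mathrm{in}(Y(i))$, $\mathrm{out}(Y)=\coprod_i\mathrm{out}(Y(i))$. A wiring diagram $\psi\colon Y\to Z$ consists of a finite set $\mathrm{Del}(\psi)$ of delay nodes with pointed sets ${\tt vset}(d)$, and a supplier assignment $s_\psi\colon \mathrm{Dem}(\psi)=\mathrm{out}(Z)\amalg\mathrm{in}(Y)\amalg\mathrm{Del}(\psi)\to\mathrm{Sup}(\psi)=\mathrm{in}(Z)\amalg\mathrm{out}(Y)\amalg\mathrm{Del}(\psi)$ preserving ${\tt vset}$ and with $s_\psi(\mathrm{out}(Z))\subseteq\mathrm{out}(Y)\amalg\mathrm{Del}(\psi)$; tuples differing by a bijection of delay-node sets compatible with all data are identified. Composition: given $\psi\colon Y\to Z$ and $\phi_i\colon X_i\to Y(i)$, let $\phi=\bigotimes\phi_i\colon X\to Y$ be their disjoint union ($\mathrm{Del}(\phi)=\coprod\mathrm{Del}(\phi_i)$,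 $s_\phi=\coprod s_{\phi_i}$). The composite $\omega=\psi\circ\phi$ has $\mathrm{Del}(\omega)=\mathrm{Del}(\phi)\amalg\mathrm{Del}(\psi)$, $\mathrm{Sup}(\omega)=\mathrm{in}(Z)\amalg\mathrm{out}(X)\amalg\mathrm{Del}(\omega)$, and $s_\omega=h\circ s_\phi|_{\mathrm{in}(X)\amalg\mathrm{Del}(\phi)}\amalg f\circ s_\psi|_{\mathrm{out}(Z)\amalg\mathrm{Del}(\psi)}$, where $f=\mathrm{id}_{\mathrm{in}(Z)}\amalg s_\phi|_{\mathrm{out}(Y)}\amalg\mathrm{id}_{\mathrm{Del}(\psi)}\colon\mathrm{Sup}(\psi)\to\mathrm{Sup}(\omega)$ and $h=(f\circ s_\psi)|_{\mathrm{in}(Y)}\amalg\mathrm{id}_{\mathrm{out}(X)}\amalg\mathrm{id}_{\mathrm{Del}(\phi)}\colon\mathrm{Sup}(\phi)\to\mathrm{Sup}(\omega)$. *)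

From mathcomp Require Import all_boot.


Record pset := PSet { pcar : Type; ppt : pcar }.

Record box := Box {
  bin  : finType;
  bout : finType;
  vin  : bin -> pset;
  vout : bout -> pset }.

Record boxfam := BoxFam { fidx : finType; fbox : fidx -> box }.

Definition union (Y : boxfam) : box :=
  Box {i : fidx Y & bin (fbox Y i)} {i : fidx Y & bout (fbox Y i)}
       (fun x => vin (fbox Y (tag x)) (tagged x)) (fun x => vout (fbox Y (tag x)) (tagged x)).

(* The supplier assignment s : Dem = out(Z) + in(D) + Del -> Sup = in(Z) + out(D) + Del
   is stored as its restriction to out(Z), which by the axiom s(out Z) <= out(D) + Del
   lands in out(D) + Del ([sup_o]), and its restriction to in(D) + Del ([sup_i]). *)
Record wd (D Z : box) := WD {
  del   : finType;
  vdel  : del -> pset;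
  sup_o : bout Z -> bout D + del;
  sup_i : bin D + del -> bin Z + bout D + del }.

Arguments WD {D Z}.
Arguments del {D Z}.
Arguments vdel {D Z}.
Arguments sup_o {D Z}.
Arguments sup_i {D Z}.

Definition Dem {D Z} (p : wd D Z) : Type := (bout Z + bin D + del p)%type.
Definition Sup {D Z} (p : wd D Z) : Type := (bin Z + bout D + del p)%type.

Definition sup {D Z} (p : wd D Z) (d : Dem p) : Sup p :=
  match d with
  | inl (inl o) => match sup_o p o with inl y => inl (inr y) | inr x => inr x end
  | inl (inr i) => sup_i p (inl i)
  | inr x => sup_i p (inr x)
  end.

Definition vdem {D Z} (p : wd D Z) (d : Dem p) : pset :=
  match d with
  | inl (inl o) => vout Z o | inl (inr i) => vin D i | inr x => vdel p x end.

Definition vsup {D Z} (p : wd D Z) (s : Sup p) : pset :=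
  match s with
  | inl (inl i) => vin Z i | inl (inr o) => vout D o | inr x => vdel p x end.

Definition wd_vset {D Z} (p : wd D Z) : Prop := forall d : Dem p, vsup p (sup p d) = vdem p d.

Definition fcomp (Y : boxfam) (X : fidx Y -> boxfam) : boxfam :=
  BoxFam {i : fidx Y & fidx (X i)} (fun p => fbox (X (tag p)) (tagged p)).

Section Tensor.
Variables (Y : boxfam) (X : fidx Y -> boxfam).
Variable phi : forall i, wd (union (X i)) (fbox Y i).

Definition tdel : finType := {i : fidx Y & del (phi i)}.

Definition tinj_o (i : fidx Y) (s : bout (union (X i)) + del (phi i))
  : bout (union (fcomp Y X)) + tdel :=
  match s with
  | inl (existT j w) => inl (existT (fun p => bout (fbox (fcomp Y X) p)) (existT _ i j) w)
  | inr x => inr (existT _ i x)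
  end.

Definition tinj (i : fidx Y) (s : Sup (phi i))
  : bin (union Y) + bout (union (fcomp Y X)) + tdel :=
  match s with
  | inl (inl y) => inl (inl (existT _ i y))
  | inl (inr (existT j w)) =>
      inl (inr (existT (fun p => bout (fbox (fcomp Y X) p)) (existT _ i j) w))
  | inr x => inr (existT _ i x)
  end.

Definition tensor : wd (union (fcomp Y X)) (union Y) :=
  @WD (union (fcomp Y X)) (union Y) tdel
    (fun x : tdel => vdel (phi (tag x)) (tagged x))
    (fun o : bout (union Y) => match o with existT i o' => tinj_o i (sup_o (phi i) o') end)
    (fun d : bin (union (fcomp Y X)) + tdel => match d with
              | inl (existT (existT i j) w) =>
                  tinj i (sup_i (phi i) (inl (existT _ j w)))
              | inr (existT i x) => tinj i (sup_i (phi i) (inr x))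
              end).
End Tensor.

Section Comp.
Variables (X Y Z : box) (psi : wd Y Z) (phi : wd X Y).

Definition cdel : finType := (del phi + del psi)%type.

(* f = id_{in Z} + s_phi|out(Y) + id_{Del psi} : Sup(psi) -> Sup(omega) *)
Definition cf (s : Sup psi) : bin Z + bout X + cdel :=
  match s with
  | inl (inl z) => inl (inl z)
  | inl (inr y) => match sup_o phi y with
                   | inl x => inl (inr x)
                   | inr d => inr (inl d)
                   end
  | inr d => inr (inr d)
  end.

(* h = (f o s_psi)|in(Y) + id_{out X} + id_{Del phi} : Sup(phi) -> Sup(omega) *)
Definition ch (s : Sup phi) : bin Z + bout X + cdel :=
  match s with
  | inl (inl y) => cf (sup_i psi (inl y))
  | inl (inr x) => inl (inr x)
  | inr d => inr (inl d)
  end.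

Definition comp : wd X Z :=
  @WD X Z cdel
    (fun d : cdel => match d with inl d1 => vdel phi d1 | inr d2 => vdel psi d2 end)
    (* (f o s_psi)|out(Z), which lands in out(X) + Del(omega) *)
    (fun o : bout Z => match sup_o psi o with
              | inl y => match sup_o phi y with
                         | inl x => inl x
                         | inr d => inr (inl d)
                         end
              | inr d => inr (inr d)
              end)
    (fun d : bin X + cdel => match d with
              | inl x => ch (sup_i phi (inl x))
              | inr (inl d1) => ch (sup_i phi (inr d1))
              | inr (inr d2) => cf (sup_i psi (inr d2))
              end).
End Comp.

Definition ocomp (Y : boxfam) (Z : box) (psi : wd (union Y) Z)
  (X : fidx Y -> boxfam) (phi : forall i, wd (union (X i)) (fbox Y i))
  : wd (union (fcomp Y X)) Z :=
  comp (union (fcomp Y X)) (union Y) Z psi (tensor Y X phi).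

Definition wd_iso {D D' Z : box} (p : wd D Z) (q : wd D' Z)
  (ein : bin D -> bin D') (eout : bout D -> bout D') : Prop :=
  exists e : del p -> del q,
    bijective e /\
    (forall x, vdel q (e x) = vdel p x) /\
    (forall d : Dem p,
        sup q (match d with
               | inl (inl o) => inl (inl o)
               | inl (inr i) => inl (inr (ein i))
               | inr x => inr (e x)
               end)
        = match sup p d with
          | inl (inl z) => inl (inl z)
          | inl (inr o) => inl (inr (eout o))
          | inr x => inr (e x)
          end).

Definition reassoc (Y : boxfam) (X : fidx Y -> boxfam)
  (W : forall i, fidx (X i) -> boxfam) (sel : box -> Type)
  (x : {q : fidx (fcomp (fcomp Y X) (fun p => W (tag p) (tagged p)))
        & sel (fbox (fcomp (fcomp Y X) (fun p => W (tag p) (tagged p))) q)})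
  : {q : fidx (fcomp Y (fun i => fcomp (X i) (W i)))
        & sel (fbox (fcomp Y (fun i => fcomp (X i) (W i))) q)} :=
  match x with
  | existT (existT (existT i j) k) w =>
      existT (fun q => sel (fbox (fcomp Y (fun i => fcomp (X i) (W i))) q))
             (existT (fun i => fidx (fcomp (X i) (W i))) i
                     (existT (fun j => fidx (W i j)) j k)) w
  end.

From mathcomp Require Import all_boot.

(* Both bracketings have the same delay nodes, Del(tau) + Del(phi) + Del(psi), merely nested
   differently, and compute a supplier by the same walk: a demand is answered by its own
   diagram, and whenever the answer is an internal wire (an input of the middle level, or an
   output of a lower level) the walk is continued by the neighbouring level, until it reaches
   an outer input, a bottom output or a delay node.  The walk therefore only depends on the
   level at which it currently is, not on the bracketing, which is checked level by level. *)

Section Associativity.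
Variables (Z : box) (Y : boxfam) (psi : wd (union Y) Z).
Variables (X : fidx Y -> boxfam) (phi : forall i, wd (union (X i)) (fbox Y i)).
Variables (W : forall i, fidx (X i) -> boxfam).
Variables (tau : forall i j, wd (union (W i j)) (fbox (X i) j)).

Local Notation X' := (fun i => fcomp (X i) (W i)).
Local Notation phi' := (fun i => ocomp (X i) (fbox Y i) (phi i) (W i) (tau i)).
Local Notation W' := (fun p => W (tag p) (tagged p)).
Local Notation tau' := (fun p => tau (tag p) (tagged p)).

Local Notation lhs := (ocomp (fcomp Y X) Z (ocomp Y Z psi X phi) W' tau').
Local Notation rhs := (ocomp Y Z psi X' phi').

Definition del_reassoc (x : del lhs) : del rhs :=
  match x with
  | inl (existT (existT i j) d) => inl (existT _ i (inl (existT _ j d)))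
  | inr (inl (existT i d)) => inl (existT _ i (inr d))
  | inr (inr d) => inr d
  end.

Definition del_unreassoc (x : del rhs) : del lhs :=
  match x with
  | inl (existT i (inl (existT j d))) =>
      inl (existT (fun p => del (tau (tag p) (tagged p))) (existT _ i j) d)
  | inl (existT i (inr d)) => inr (inl (existT _ i d))
  | inr d => inr (inr d)
  end.

Lemma del_reassocK : cancel del_reassoc del_unreassoc.
Proof. by case=> [[[i j] d]|[[i d]|d]]. Qed.

Lemma del_unreassocK : cancel del_unreassoc del_reassoc.
Proof. by case=> [[i [[j d]|d]]|d]. Qed.

Lemma del_reassoc_bij : bijective del_reassoc.
Proof. exact: Bijective del_reassocK del_unreassocK. Qed.

Lemma vdel_reassoc (x : del lhs) : vdel rhs (del_reassoc x) = vdel lhs x.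
Proof. by case: x => [[[i j] d]|[[i d]|d]]. Qed.

Definition dem_reassoc (d : Dem lhs) : Dem rhs :=
  match d with
  | inl (inl o) => inl (inl o)
  | inl (inr i) => inl (inr (reassoc Y X W (fun b => bin b) i))
  | inr x => inr (del_reassoc x)
  end.

Definition sup_reassoc (s : Sup lhs) : Sup rhs :=
  match s with
  | inl (inl z) => inl (inl z)
  | inl (inr o) => inl (inr (reassoc Y X W (fun b => bout b) o))
  | inr x => inr (del_reassoc x)
  end.

Lemma sup_reassoc_out (o : bout Z) :
  sup rhs (dem_reassoc (inl (inl o))) = sup_reassoc (sup lhs (inl (inl o))).
Proof.
rewrite /= /tinj_o.
case: (sup_o psi o) => [[i y]|d] //=.
case: (sup_o (phi i) y) => [[j x]|d] //=.
by case: (sup_o (tau i j) x) => [[k w]|d].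
Qed.

Local Notation cf_l := (cf _ _ _ (ocomp Y Z psi X phi) (tensor (fcomp Y X) W' tau')).
Local Notation ch_l := (ch _ _ _ (ocomp Y Z psi X phi) (tensor (fcomp Y X) W' tau')).
Local Notation cf_psi_phi := (cf _ _ _ psi (tensor Y X phi)).
Local Notation ch_psi_phi := (ch _ _ _ psi (tensor Y X phi)).
Local Notation cf_r := (cf _ _ _ psi (tensor Y X' phi')).
Local Notation ch_r := (ch _ _ _ psi (tensor Y X' phi')).
Local Notation cf_phi_tau i := (cf _ _ _ (phi i) (tensor (X i) (W i) (tau i))).
Local Notation ch_phi_tau i := (ch _ _ _ (phi i) (tensor (X i) (W i) (tau i))).

Lemma sup_reassoc_psi (s : Sup psi) : sup_reassoc (cf_l (cf_psi_phi s)) = cf_r s.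
Proof.
case: s => [[z|[i y]]|d] //=; rewrite /tinj_o.
case: (sup_o (phi i) y) => [[j x]|d] //=.
by case: (sup_o (tau i j) x) => [[k w]|d].
Qed.

Lemma sup_reassoc_phi i (s : Sup (phi i)) :
  sup_reassoc (cf_l (ch_psi_phi (tinj Y X phi i s)))
  = ch_r (tinj Y X' phi' i (cf_phi_tau i s)).
Proof.
case: s => [[y|[j x]]|d] //=; first exact: sup_reassoc_psi.
rewrite /tinj_o; by case: (sup_o (tau i j) x) => [[k w]|d].
Qed.

Lemma sup_reassoc_tau i j (s : Sup (tau i j)) :
  sup_reassoc (ch_l (tinj (fcomp Y X) W' tau' (existT _ i j) s))
  = ch_r (tinj Y X' phi' i (ch_phi_tau i (tinj (X i) (W i) (tau i) j s))).
Proof. case: s => [[x|[k w]]|d] //=; exact: sup_reassoc_phi. Qed.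

Lemma sup_dem_reassoc (d : Dem lhs) : sup rhs (dem_reassoc d) = sup_reassoc (sup lhs d).
Proof.
case: d => [[o|[[[i j] k] w]]|[[[i j] x]|[[i x]|x]]].
- exact: sup_reassoc_out.
- exact: (esym (sup_reassoc_tau i j _)).
- exact: (esym (sup_reassoc_tau i j _)).
- exact: (esym (sup_reassoc_phi i _)).
- exact: (esym (sup_reassoc_psi _)).
Qed.

End Associativity.

Theorem proposition2p15
  (Z : box) (Y : boxfam) (psi : wd (union Y) Z)
  (X : fidx Y -> boxfam) (phi : forall i : fidx Y, wd (union (X i)) (fbox Y i))
  (W : forall i : fidx Y, fidx (X i) -> boxfam)
  (tau : forall (i : fidx Y) (j : fidx (X i)), wd (union (W i j)) (fbox (X i) j)) :
  wd_vset psi ->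
  (forall i, wd_vset (phi i)) ->
  (forall i j, wd_vset (tau i j)) ->
  wd_iso
    (ocomp (fcomp Y X) Z (ocomp Y Z psi X phi)
           (fun p => W (tag p) (tagged p))
           (fun p => tau (tag p) (tagged p)))
    (ocomp Y Z psi (fun i => fcomp (X i) (W i))
           (fun i => ocomp (X i) (fbox Y i) (phi i) (W i) (tau i)))
    (reassoc Y X W (fun b => bin b)) (reassoc Y X W (fun b => bout b)).
Proof.
(* Associativity concerns only the supplier assignments. *)
move=> _ _ _.
exists (@del_reassoc Z Y psi X phi W tau); split; last split.
- exact: del_reassoc_bij.
- exact: vdel_reassoc.
- exact: sup_dem_reassoc.
Qed.
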